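(* Let $G$ be a non-complete double-critical $k$-chromatic graph. For every vertex $x\in V(G)$, the minimum degree of the neighbourhood graph $G_x$ is at least $k-2$, i.e. $\delta(G_x)\ge k-2$.
   Context: All graphs are finite and simple. A graph $G$ is (vertex-)critical if $\chi(G-v)<\chi(G)$ for every vertex $v\in V(G)$. A critical graph $G$ is double-critical if $\chi(G-x-y)\le\chi(G)-2$ for every edge $xy\in E(G)$. For a vertex $x$, $G_x:=G[N(x)]$ denotes the subgraph induced by the (open) neighbourhood of $x$. *)

From mathcomp Require Import all_boot.
Set Implicit Arguments. Unset Strict Implicit. Unset Printing Implicit Defensive.

Definition simple_graph (T : finType) (e : rel T) : Prop :=
  symmetric e /\ irreflexive e.

(* The (x != y) guard only matters for non-irreflexive e (never the case
   for a simple graph); it makes chromatic numbers always defined. *)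
Definition colorable (T : finType) (e : rel T) (A : {set T}) (k : nat) : bool :=
  [exists f : {ffun T -> 'I_k},
     [forall x in A, forall y in A, (x != y) && e x y ==> (f x != f y)]].

Lemma colorable_exists (T : finType) (e : rel T) (A : {set T}) :
  exists k, colorable e A k.
Proof.
exists #|T|; apply/existsP; exists [ffun x => enum_rank x].
apply/forallP=> x; apply/implyP=> _; apply/forallP=> y; apply/implyP=> _.
apply/implyP=> /andP [nxy _]; rewrite !ffunE; apply: contra nxy.
by move/eqP/enum_rank_inj=> ->.
Qed.

Definition chi (T : finType) (e : rel T) (A : {set T}) : nat :=
  ex_minn (colorable_exists e A).

Definition nbhd (T : finType) (e : rel T) (x : T) : {set T} := [set y | e x y].

Definition critical (T : finType) (e : rel T) : Prop :=
  forall v : T, chi e ([set: T] :\ v) < chi e [set: T].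

Definition double_critical (T : finType) (e : rel T) : Prop :=
  critical e /\
  forall x y : T, e x y -> chi e ([set: T] :\ x :\ y) <= chi e [set: T] - 2.

Definition complete (T : finType) (e : rel T) : Prop :=
  forall x y : T, x != y -> e x y.

From mathcomp Require Import all_boot zify.
Set Implicit Arguments. Unset Strict Implicit. Unset Printing Implicit Defensive.

(* If [f] properly colours [G - x - y] with [m] colours and
   some colour [c] is missing on the common neighbourhood of [x] and [y], then
   [G] is [m+1]-colourable: give [y] the colour [c], recolour the [c]-coloured
   neighbours of [y] with a fresh colour, and give [x] that fresh colour too.
   Hence a [k]-chromatic graph in which [G - x - y] is [(k-2)]-colourable sees
   all [k-2] colours on [N(x) ∩ N(y)], which therefore has [k-2] vertices. *)

Section Colorings.

Variables (T : finType) (e : rel T).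

Definition proper_coloring (A : {set T}) m (f : {ffun T -> 'I_m}) : bool :=
  [forall u in A, forall v in A, (u != v) && e u v ==> (f u != f v)].

Lemma proper_coloringP (A : {set T}) m (f : {ffun T -> 'I_m}) :
  reflect (forall u v, u \in A -> v \in A -> u != v -> e u v -> f u != f v)
          (proper_coloring A f).
Proof.
apply: (iffP forallP) => [Hf u v uA vA nuv euv | Hf u].
  by have /forall_inP/(_ v vA)/implyP := implyP (Hf u) uA; apply; rewrite nuv.
apply/implyP=> uA; apply/forall_inP=> v vA; apply/implyP=> /andP[nuv euv].
exact: Hf.
Qed.

Lemma colorableP (A : {set T}) m :
  reflect (exists f : {ffun T -> 'I_m}, proper_coloring A f) (colorable e A m).
Proof. exact: existsP. Qed.

Lemma chi_min (A : {set T}) m : colorable e A m -> chi e A <= m.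
Proof. by rewrite /chi; case: ex_minnP => n _; apply. Qed.

Lemma colorable_chi (A : {set T}) : colorable e A (chi e A).
Proof. by rewrite /chi; case: ex_minnP. Qed.

Lemma colorable_widen (A : {set T}) m n : m <= n -> colorable e A m -> colorable e A n.
Proof.
move=> le_mn /colorableP[f /proper_coloringP Hf]; apply/colorableP.
exists [ffun v => widen_ord le_mn (f v)]; apply/proper_coloringP.
move=> u v uA vA nuv euv; rewrite !ffunE -val_eqE /=.
exact: Hf.
Qed.

Hypothesis esym : symmetric e.

Variables (x y : T) (m : nat) (f : {ffun T -> 'I_m}) (c : 'I_m).

Local Notation widenS i := (widen_ord (leqnSn m) i).

Definition recolor : {ffun T -> 'I_m.+1} :=
  [ffun v => if v == x then ord_max
             else if v == y then widenS c
             else if e y v && (f v == c) then ord_max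
             else widenS (f v)].

Hypothesis f_proper : proper_coloring ([set: T] :\ x :\ y) f.
Hypothesis c_missing : c \notin f @: (nbhd e x :&: nbhd e y).

Lemma widenS_neq_max (i : 'I_m) : (widenS i == ord_max) = false.
Proof. by apply/negbTE; rewrite -val_eqE /= neq_ltn ltn_ord. Qed.

Lemma widenS_eq (i j : 'I_m) : (widenS i == widenS j) = (i == j).
Proof. by rewrite -!val_eqE. Qed.

Lemma common_nbhd_color z : e x z -> e y z -> f z != c.
Proof.
move=> exz eyz; apply: contraNneq c_missing => <-.
by apply: imset_f; rewrite !inE exz eyz.
Qed.

Lemma recolor_proper : proper_coloring [set: T] recolor.
Proof.
apply/proper_coloringP => u v _ _.
wlog uxy : u v / (u == x) || (u == y) || (v != x) && (v != y).
  move=> wlogH nuv euv.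
  case: (boolP ((u == x) || (u == y) || (v != x) && (v != y))) => [|uv].
    by move/wlogH; apply.
  move: uv; rewrite !negb_or negb_and !negbK => /andP[/andP[nux nuy] vxy].
  rewrite eq_sym; apply: (wlogH v u); first by rewrite vxy.
    by rewrite eq_sym.
  by rewrite esym.
have [-> nxv exv | nux] := eqVneq u x; rewrite !ffunE.
  rewrite eqxx (eq_sym v x) (negbTE nxv).
  case: ifP => [_|_]; first by rewrite eq_sym widenS_neq_max.
  case: ifP => [/andP[eyv /eqP fv] | _]; last by rewrite eq_sym widenS_neq_max.
  by move: (common_nbhd_color exv eyv); rewrite fv eqxx.
rewrite (negbTE nux); have [-> nyv eyv | nuy] := eqVneq u y.
  case: ifP => [_|_]; first by rewrite widenS_neq_max.
  rewrite (eq_sym v y) (negbTE nyv) eyv /=.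
  by case: ifP => [_|/negbT fvc]; rewrite ?widenS_neq_max // widenS_eq eq_sym.
move: uxy; rewrite (negbTE nux) (negbTE nuy) /= => /andP[nvx nvy] nuv euv.
rewrite (negbTE nvx) (negbTE nvy).
have fuv : f u != f v.
  by apply: (proper_coloringP _ _ f_proper); rewrite // !inE ?nux ?nuy ?nvx ?nvy.
case: ifP => [/andP[_ /eqP fu] | _]; case: ifP => [/andP[_ /eqP fv] | _].
- by rewrite fu fv eqxx in fuv.
- by rewrite eq_sym widenS_neq_max.
- by rewrite widenS_neq_max.
- by rewrite widenS_eq.
Qed.

Lemma colorable_recolor : colorable e [set: T] m.+1.
Proof. by apply/colorableP; exists recolor; apply: recolor_proper. Qed.

End Colorings.

Lemma card_common_nbhd (T : finType) (e : rel T) x y m (f : {ffun T -> 'I_m}) :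
  symmetric e -> proper_coloring e ([set: T] :\ x :\ y) f ->
  ~~ colorable e [set: T] m.+1 -> m <= #|nbhd e x :&: nbhd e y|.
Proof.
move=> esym f_proper not_col.
have all_colors : f @: (nbhd e x :&: nbhd e y) = [set: 'I_m].
  apply/eqP; rewrite eqEsubset subsetT; apply/subsetP => c _.
  by apply: contraNT not_col => /(colorable_recolor esym f_proper).
by rewrite -[m in m <= _]card_ord -cardsT -all_colors leq_imset_card.
Qed.

Theorem proposition6 (T : finType) (e : rel T) (k : nat) :
  simple_graph e ->
  ~ complete e ->
  double_critical e ->
  chi e [set: T] = k ->
  forall x y : T, y \in nbhd e x ->
    k - 2 <= #|nbhd e x :&: nbhd e y|.
Proof.
move=> [esym _] _ [_ edge_critical] chiG x y; rewrite inE => exy.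
have [k_le1 | k_gt1] := leqP k 1; first by rewrite (_ : k - 2 = 0) //; lia.
have /colorableP[f f_proper] : colorable e ([set: T] :\ x :\ y) (k - 2).
  by apply: colorable_widen (colorable_chi _ _); rewrite -chiG edge_critical.
apply: card_common_nbhd esym f_proper _.
by apply/negP => /chi_min; rewrite chiG; lia.
Qed.
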